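(* Let $n,k,p$ be non-negative integers with $p(k^2-1) \le n$, and let $\mathscr{F}$ be a family of $t$ graphs, each with $n$ vertices, $k$-colorable, and of pathwidth at most $p$. If $t \ge \max\{4k^2, 811\}$, then \[ \mathscr{U}(\mathscr{F}) ~<~ \frac{15}{7}\sqrt{t}\, n . \]
   Context: A graph $U$ is an induced-universal graph for a family $\mathscr{F}$ if every graph of $\mathscr{F}$ is isomorphic to an induced subgraph of $U$; $\mathscr{U}(\mathscr{F})$ is the smallest number of vertices of such a $U$. *)

From mathcomp Require Import all_boot all_order all_algebra.
Set Implicit Arguments. Unset Strict Implicit. Unset Printing Implicit Defensive.
Import Order.TTheory GRing.Theory Num.Theory.

Record sgraph (V : finType) := SGraph {
  adj : rel V;
  adj_sym : symmetric adj;
  adj_irr : irreflexive adj }.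

Definition induced_sub (V W : finType) (G : sgraph V) (U : sgraph W) : Prop :=
  exists f : V -> W, injective f /\ forall x y, adj U (f x) (f y) = adj G x y.

Definition induced_universal (I W : finType) (V : I -> finType)
  (F : forall i, sgraph (V i)) (U : sgraph W) : Prop :=
  forall i, induced_sub (F i) U.

Definition colorable (V : finType) (k : nat) (G : sgraph V) : Prop :=
  exists c : V -> 'I_k, forall x y, adj G x y -> c x != c y.

Definition path_decomposition (V : finType) (G : sgraph V) (B : seq {set V}) : Prop :=
  [/\ forall v, exists2 X, X \in B & v \in X,
      forall u v, adj G u v -> exists2 X, X \in B & (u \in X) && (v \in X)
    & forall v i j l, i <= j -> j <= l -> l < size B ->
        v \in nth set0 B i -> v \in nth set0 B l -> v \in nth set0 B j].

Definition pathwidth_le (V : finType) (G : sgraph V) (p : nat) : Prop :=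
  exists2 B, path_decomposition G B & forall X, X \in B -> #|X| <= p.+1.

(* m >= U(F): there is an induced-universal graph for F with m vertices.
   U(F) < b  iff  some m with universal_of_size F m satisfies m < b. *)
Definition universal_of_size (I : finType) (V : I -> finType)
  (F : forall i, sgraph (V i)) (m : nat) : Prop :=
  exists U : sgraph 'I_m, induced_universal F U.

(* Let a = floor (sqrt t) and let q > a be a prime with [fits a q], i.e. not much larger than a.
   Lay out each graph, colour class after colour class, in at most q + 1 columns of height
   b ~ n / (q + 2 - k), so that every edge joins two different columns. Index the graphs by
   points i of the affine plane over F_q (t <= q^2), let the q + 1 columns stand for its q + 1
   parallel classes of lines, and send the cell (j, r) of graph i to the triple
   (j, line of class j through i, r). Two distinct points share at most one line, so an edge of
   graph i' joining two images of vertices of graph i forces i' = i: the union of the embedded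
   graphs is induced-universal, with about q (q + 2) n / (q + 2 - k) < 15/7 sqrt t n vertices.
   For a >= 15000 the prime is found in (a, 4a/3] by Chebyshev's method: the p-adic valuations
   of (30n)! n! / ((15n)! (10n)! (6n)!) squeeze lcm(1..30n) between about cheb_base^n and
   cheb_base^(5n/4), which leaves no room for a prime gap (a, 4a/3]; below 15000 an explicit
   ladder of primes does the job. *)

From HB Require Import structures.
From Stdlib Require Import ZArith.
From mathcomp Require Import all_boot all_order all_algebra.
Import Order.TTheory GRing.Theory Num.Theory.
From mathcomp Require Import ring lra zify.

Set Implicit Arguments.
Unset Strict Implicit.
Unset Printing Implicit Defensive.

(* The Chebyshev weight [M + M/30 - M/2 - M/3 - M/5] is 0 or 1, and it is 1 for 0 < M <= 5. *)
Lemma chebyshev_weight_ge M :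
  M %/ 2 + M %/ 3 + M %/ 5 + (0 < M) <= M + M %/ 30 + (5 < M).
Proof. by case: (posnP M) => [-> // | M_gt0]; case: (ltnP 5 M) => /=; lia. Qed.

Lemma chebyshev_weight_le M : M + M %/ 30 <= M %/ 2 + M %/ 3 + M %/ 5 + (0 < M).
Proof. by case: (posnP M) => [-> // | M_gt0] /=; lia. Qed.

Lemma logn_prod p I (r : seq I) (P : pred I) (F : I -> nat) :
  (forall i, P i -> 0 < F i) ->
  logn p (\prod_(i <- r | P i) F i) = \sum_(i <- r | P i) logn p (F i).
Proof.
move=> F_gt0; elim: r => [|i r IHr]; first by rewrite !big_nil logn1.
rewrite !big_cons; case: ifP => // P_i.
by rewrite lognM ?IHr ?F_gt0 ?prodn_cond_gt0.
Qed.

Lemma dvdn_from_log m n : 0 < m -> 0 < n ->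
  (forall p, prime p -> logn p m <= logn p n) -> m %| n.
Proof.
move=> m_gt0 n_gt0 le_mn; apply/dvdn_partP => // p.
by rewrite mem_primes => /and3P[p_pr _ _]; rewrite p_part pfactor_dvdn // le_mn.
Qed.

Lemma logn_fact_upto p m M : prime p -> m <= M ->
  logn p m`! = \sum_(1 <= k < M.+1) m %/ p ^ k.
Proof.
move=> p_pr le_mM; rewrite logn_fact // [RHS](big_cat_nat _ (n := m.+1)) //=.
rewrite [X in _ = _ + X]big_nat [X in _ = _ + X]big1 ?addn0 // => k /andP[m_lt_k _].
by rewrite divn_small // (leq_trans m_lt_k) // ltnW // ltn_expl // prime_gt1.
Qed.

Lemma trunc_log_count p m M : prime p -> m <= M ->
  trunc_log p m = \sum_(1 <= k < M.+1) (p ^ k <= m).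
Proof.
move=> p_pr le_mM; have p_gt1 := prime_gt1 p_pr.
have [-> | m_gt0] := posnP m.
  rewrite trunc_log0 big_nat big1 // => k /andP[k_gt0 _].
  by rewrite leqn0 expn_eq0 (gtn_eqF (prime_gt0 p_pr)).
set e := trunc_log p m; have pe_le_m : p ^ e <= m := trunc_logP p_gt1 m_gt0.
have le_eM : e <= M by rewrite (leq_trans _ le_mM) // (leq_trans _ pe_le_m) // ltnW // ltn_expl.
rewrite [RHS](big_cat_nat _ (n := e.+1)) //= [X in _ = _ + X]big_nat.
rewrite [X in _ = _ + X]big1 ?addn0; last first.
  move=> k /andP[e_lt_k _]; suff /negbTE-> : ~~ (p ^ k <= m) by []; rewrite -ltnNge.
  exact: leq_trans (trunc_log_ltn m p_gt1) (leq_pexp2l (ltnW p_gt1) e_lt_k).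
rewrite big_nat (eq_bigr (fun=> 1)) => [|k /andP[_ k_le_e]].
  by rewrite -big_nat sum_nat_const_nat subSS subn0 muln1.
by rewrite (leq_trans _ pe_le_m) // leq_pexp2l // ltnW.
Qed.

Definition lcm_upto m := \prod_(p < m.+1 | prime p) p ^ trunc_log p m.

Lemma lcm_upto_gt0 m : 0 < lcm_upto m.
Proof. by apply: prodn_cond_gt0 => p /prime_gt0 p_gt0; rewrite expn_gt0 p_gt0. Qed.

Lemma logn_lcm_upto p m : prime p -> logn p (lcm_upto m) = trunc_log p m.
Proof.
move=> p_pr; rewrite logn_prod => [|q /prime_gt0 q_gt0]; last by rewrite expn_gt0 q_gt0.
under eq_bigr => q q_pr do rewrite lognX logn_prime //.
have [m_lt_p | p_le_m] := ltnP m p.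
  rewrite big1 => [|q _]; last by rewrite gtn_eqF ?muln0 // (leq_trans (ltn_ord q)).
  by apply/esym/eqP; rewrite trunc_log_eq0; apply/orP; right; lia.
rewrite (bigD1 (Ordinal (p_le_m : p < m.+1))) //= eqxx muln1 big1 ?addn0 // => q /andP[_ q_neq].
by rewrite (_ : (p == q) = false) ?muln0 //; apply: contraNF q_neq => /eqP p_q; apply/eqP/val_inj.
Qed.

Lemma logn_lcm_upto_count p m M : prime p -> m <= M ->
  logn p (lcm_upto m) = \sum_(1 <= k < M.+1) (p ^ k <= m).
Proof. by move=> p_pr le_mM; rewrite logn_lcm_upto // (trunc_log_count p_pr le_mM). Qed.

Lemma lcm_upto_dvd_fact m : lcm_upto m %| m`!.
Proof.
apply: dvdn_from_log; rewrite ?lcm_upto_gt0 ?fact_gt0 // => p p_pr.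
rewrite (logn_lcm_upto_count p_pr (leqnn m)) (logn_fact_upto p_pr (leqnn m)).
apply: leq_sum => k _; case: (leqP (p ^ k) m) => //= pk_le_m.
by rewrite divn_gt0 // expn_gt0 prime_gt0.
Qed.

Lemma lcm_upto_dvd m m' : m <= m' -> lcm_upto m %| lcm_upto m'.
Proof.
move=> le_mm'; apply: dvdn_from_log; rewrite ?lcm_upto_gt0 // => p p_pr.
by rewrite !logn_lcm_upto // leq_trunc_log.
Qed.

Lemma leq_lcm_upto m m' : m <= m' -> lcm_upto m <= lcm_upto m'.
Proof. by move=> le_mm'; rewrite dvdn_leq ?lcm_upto_gt0 ?lcm_upto_dvd. Qed.

Definition cheb_num n := (30 * n)`! * n`!.
Definition cheb_den n := (15 * n)`! * (10 * n)`! * (6 * n)`!.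

Lemma cheb_num_gt0 n : 0 < cheb_num n.
Proof. by rewrite muln_gt0 !fact_gt0. Qed.

Lemma cheb_den_gt0 n : 0 < cheb_den n.
Proof. by rewrite !muln_gt0 !fact_gt0. Qed.

Lemma logn_cheb_num p n : prime p -> logn p (cheb_num n) =
  \sum_(1 <= k < (30 * n).+1) (30 * n %/ p ^ k + 30 * n %/ p ^ k %/ 30).
Proof.
move=> p_pr; rewrite lognM ?fact_gt0 // !(logn_fact_upto (M := 30 * n) p_pr) ?leq_pmull //.
by rewrite -big_split; apply: eq_bigr => k _; rewrite divnAC mulKn.
Qed.

Lemma logn_cheb_den p n : prime p -> logn p (cheb_den n) =
  \sum_(1 <= k < (30 * n).+1)
    (30 * n %/ p ^ k %/ 2 + 30 * n %/ p ^ k %/ 3 + 30 * n %/ p ^ k %/ 5).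
Proof.
move=> p_pr; rewrite !lognM ?muln_gt0 ?fact_gt0 //.
rewrite !(logn_fact_upto (M := 30 * n) p_pr) ?leq_mul2r ?orbT //.
rewrite -!big_split; apply: eq_bigr => k _; rewrite !(divnAC (30 * n) (p ^ k)).
by rewrite -[30 * n]/(2 * 15 * n) -mulnA mulKn // mulnA -[2 * 15 * n]/(3 * 10 * n) -mulnA mulKn //
  mulnA -[3 * 10 * n]/(5 * 6 * n) -mulnA mulKn.
Qed.

Lemma cheb_den_lcm_upto_dvd n :
  cheb_den n * lcm_upto (30 * n) %| cheb_num n * lcm_upto (5 * n).
Proof.
have [den_gt0 num_gt0] := (cheb_den_gt0 n, cheb_num_gt0 n).
have [lcm30_gt0 lcm5_gt0] := (lcm_upto_gt0 (30 * n), lcm_upto_gt0 (5 * n)).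
have lhs_gt0 : 0 < cheb_den n * lcm_upto (30 * n) by rewrite muln_gt0 den_gt0.
have rhs_gt0 : 0 < cheb_num n * lcm_upto (5 * n) by rewrite muln_gt0 num_gt0.
apply: (dvdn_from_log lhs_gt0 rhs_gt0) => p p_pr.
rewrite (lognM _ den_gt0 lcm30_gt0) (lognM _ num_gt0 lcm5_gt0) logn_cheb_num // logn_cheb_den //.
rewrite !(logn_lcm_upto_count (M := 30 * n) p_pr) ?leq_mul2r ?orbT // -!big_split /=.
apply: leq_sum => k _; have pk_gt0 : 0 < p ^ k by rewrite expn_gt0 prime_gt0.
have -> : (p ^ k <= 30 * n) = (0 < 30 * n %/ p ^ k) by rewrite divn_gt0.
have -> : (p ^ k <= 5 * n) = (5 < 30 * n %/ p ^ k).
  by rewrite leq_divRL // -[30 * n]/(6 * 5 * n) -mulnA leq_pmul2l.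
exact: chebyshev_weight_ge.
Qed.

Lemma cheb_num_dvd n : cheb_num n %| cheb_den n * lcm_upto (30 * n).
Proof.
have [den_gt0 lcm_gt0] := (cheb_den_gt0 n, lcm_upto_gt0 (30 * n)).
have rhs_gt0 : 0 < cheb_den n * lcm_upto (30 * n) by rewrite muln_gt0 den_gt0.
apply: (dvdn_from_log (cheb_num_gt0 n) rhs_gt0) => p p_pr.
rewrite (lognM _ den_gt0 lcm_gt0) logn_cheb_num // logn_cheb_den //.
rewrite (logn_lcm_upto_count p_pr (leqnn _)) -big_split /=.
apply: leq_sum => k _; have pk_gt0 : 0 < p ^ k by rewrite expn_gt0 prime_gt0.
have -> : (p ^ k <= 30 * n) = (0 < 30 * n %/ p ^ k) by rewrite divn_gt0.
exact: chebyshev_weight_le.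
Qed.

(* [30^30 / (15^15 10^10 6^6)], the growth rate of [cheb_num n / cheb_den n]; locked since
   it is a 39-bit unary numeral. *)
HB.lock Definition cheb_base : nat := 2 ^ 14 * 3 ^ 9 * 5 ^ 5.

Lemma cheb_base_gt1 : 1 < cheb_base.
Proof. by rewrite cheb_base.unlock. Qed.

Lemma factD m k : (m + k)`! = m`! * \prod_(x <- iota 1 k) (m + x).
Proof.
elim: k => [|k IHk]; first by rewrite addn0 big_nil muln1.
by rewrite addnS factS IHk -[k.+1]addn1 iotaD big_cat big_seq1 /= add1n addnS; ring.
Qed.

Definition bumps (xs ys : seq nat) := count (fun xy => xy.2 == xy.1.+1) (zip xs ys).

Lemma leq_prod_addn c xs ys : all2 leq xs ys ->
  \prod_(x <- xs) (c + x) <= \prod_(y <- ys) (c + y).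
Proof.
elim: xs ys => [|x xs IHxs] [|y ys] //= /andP[le_xy le_xsys].
by rewrite !big_cons leq_mul ?leq_add2l ?IHxs.
Qed.

(* [c + x + 1] over [c + x] is at most [c + 2] over [c + 1] once [x >= 1]. *)
Lemma prod_addn_bumps c xs ys :
  all2 (fun x y => (y == x) || (y == x.+1) && (0 < x)) xs ys ->
  \prod_(y <- ys) (c + y) * (c + 1) ^ bumps xs ys <=
    \prod_(x <- xs) (c + x) * (c + 2) ^ bumps xs ys.
Proof.
rewrite /bumps; elim: xs ys => [|x xs IHxs] [|y ys] //=.
case/andP=> /orP[/eqP-> | /andP[/eqP-> x_gt0]] /IHxs le_xsys; rewrite !big_cons.
  by rewrite ltn_eqF // add0n -!mulnA leq_mul2l le_xsys orbT.
rewrite eqxx add1n !expnS mulnACA [leqRHS]mulnACA leq_mul //; nia.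
Qed.

Definition cheb_num_ratio n := n.+1 * \prod_(x <- iota 1 30) (30 * n + x).
Definition cheb_den_ratio n := \prod_(x <- iota 1 15) (15 * n + x) *
  \prod_(x <- iota 1 10) (10 * n + x) * \prod_(x <- iota 1 6) (6 * n + x).

Lemma cheb_numS n : cheb_num n.+1 = cheb_num n * cheb_num_ratio n.
Proof. by rewrite /cheb_num /cheb_num_ratio mulnS addnC factD factS; ring. Qed.

Lemma cheb_denS n : cheb_den n.+1 = cheb_den n * cheb_den_ratio n.
Proof. by rewrite /cheb_den /cheb_den_ratio !mulnS ![_ + _ * n]addnC !factD; ring. Qed.

(* [30 * cheb_num_ratio n] and [30 * cheb_base * cheb_den_ratio n] are products of the 31
   factors [30 n + x], [x] running over the following lists; the second list exceeds the
   first termwise by 0 or 1, and by 1 in exactly 15 places. *)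
Definition cheb_num_shifts := rcons (iota 1 30) 30.
Definition cheb_den_shifts := sort leq
  ([seq 2 * x | x <- iota 1 15] ++ [seq 3 * x | x <- iota 1 10] ++ [seq 5 * x | x <- iota 1 6]).

Lemma cheb_num_ratioE n : 30 * cheb_num_ratio n = \prod_(x <- cheb_num_shifts) (30 * n + x).
Proof. by rewrite /cheb_num_ratio /cheb_num_shifts -cats1 big_cat big_seq1 /=; ring. Qed.

Lemma cheb_den_ratioE n :
  30 * cheb_base * cheb_den_ratio n = \prod_(y <- cheb_den_shifts) (30 * n + y).
Proof.
rewrite /cheb_den_shifts (perm_big _ (permEl (perm_sort _ _))) !big_cat !big_map.
have scale a b m s :
    \prod_(x <- s) (a * b * m + a * x) = a ^ size s * \prod_(x <- s) (b * m + x).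
  by elim: s => [|x s IHs]; rewrite ?big_nil ?big_cons ?IHs //= expnS; ring.
rewrite -[30 * n]/(2 * 15 * n) scale -[2 * 15 * n]/(3 * 10 * n) scale.
by rewrite -[3 * 10 * n]/(5 * 6 * n) scale /cheb_den_ratio cheb_base.unlock /=; ring.
Qed.

Lemma cheb_shifts_leq : all2 leq cheb_num_shifts cheb_den_shifts.
Proof. by vm_compute. Qed.

Lemma cheb_shifts_bump :
  all2 (fun x y => (y == x) || (y == x.+1) && (0 < x)) cheb_num_shifts cheb_den_shifts.
Proof. by vm_compute. Qed.

Lemma cheb_shifts_bumps : bumps cheb_num_shifts cheb_den_shifts = 15.
Proof. by vm_compute. Qed.

Lemma cheb_num_ratio_le n : cheb_num_ratio n <= cheb_base * cheb_den_ratio n.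
Proof.
rewrite -(leq_pmul2l (isT : 0 < 30)) (mulnA 30 cheb_base) cheb_num_ratioE cheb_den_ratioE.
exact: leq_prod_addn cheb_shifts_leq.
Qed.

Lemma cheb_num_ratio_ge n :
  cheb_base * cheb_den_ratio n * (30 * n + 1) ^ 15 <= cheb_num_ratio n * (30 * n + 2) ^ 15.
Proof.
rewrite -(leq_pmul2l (isT : 0 < 30)) !(mulnA 30 (_ * _)) (mulnA 30 cheb_base).
rewrite cheb_num_ratioE cheb_den_ratioE.
by have := prod_addn_bumps (30 * n) cheb_shifts_bump; rewrite cheb_shifts_bumps.
Qed.

Lemma cheb_num_le n : cheb_num n <= cheb_base ^ n * cheb_den n.
Proof.
elim: n => [|n IHn]; first by rewrite /cheb_num /cheb_den !muln0.
rewrite cheb_numS cheb_denS expnS.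
have -> : cheb_base * cheb_base ^ n * (cheb_den n * cheb_den_ratio n) =
  cheb_base ^ n * cheb_den n * (cheb_base * cheb_den_ratio n) by ring.
exact: leq_mul IHn (cheb_num_ratio_le n).
Qed.

Lemma cheb_num_ge n : 0 < n -> cheb_base ^ n * cheb_den n <= (2 * n) ^ 15 * cheb_num n.
Proof.
case: n => // n _; elim: n => [|n IHn].
  have := cheb_num_ratio_ge 0; rewrite cheb_numS cheb_denS /cheb_num /cheb_den !muln0.
  by rewrite !fact0 !add0n exp1n !mul1n !muln1 expn1 [leqRHS]mulnC.
set c := 30 * n.+1 + 1.
rewrite -(@leq_pmul2r (c ^ 15)) ?expn_gt0 ?addn1 //.
have -> : cheb_base ^ n.+2 * cheb_den n.+2 * c ^ 15 =
    cheb_base ^ n.+1 * cheb_den n.+1 * (cheb_base * cheb_den_ratio n.+1 * c ^ 15).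
  by rewrite [cheb_den n.+2]cheb_denS expnS; ring.
apply: leq_trans (leq_mul IHn (cheb_num_ratio_ge n.+1)) _.
have -> : (2 * n.+1) ^ 15 * cheb_num n.+1 * (cheb_num_ratio n.+1 * (30 * n.+1 + 2) ^ 15) =
    (2 * n.+1 * (30 * n.+1 + 2)) ^ 15 * cheb_num n.+2.
  by rewrite [cheb_num n.+2]cheb_numS expnMn; ring.
rewrite [leqRHS]mulnAC -expnMn leq_mul // leq_exp2r //; nia.
Qed.

Lemma lcm_upto_mul30_le n : lcm_upto (30 * n) <= cheb_base ^ n * lcm_upto (5 * n).
Proof.
have rhs_gt0 : 0 < cheb_num n * lcm_upto (5 * n) by rewrite muln_gt0 cheb_num_gt0 lcm_upto_gt0.
rewrite -(leq_pmul2l (cheb_den_gt0 n)).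
apply: leq_trans (dvdn_leq rhs_gt0 (cheb_den_lcm_upto_dvd n)) _.
by rewrite (mulnA (cheb_den n)) [cheb_den n * _]mulnC leq_mul // cheb_num_le.
Qed.

Lemma cheb_base_le_lcm_upto n : 0 < n -> cheb_base ^ n <= (2 * n) ^ 15 * lcm_upto (30 * n).
Proof.
move=> n_gt0; have rhs_gt0 : 0 < cheb_den n * lcm_upto (30 * n).
  by rewrite muln_gt0 cheb_den_gt0 lcm_upto_gt0.
rewrite -(leq_pmul2r (cheb_den_gt0 n)); apply: leq_trans (cheb_num_ge n_gt0) _.
by rewrite -mulnA leq_mul // mulnC dvdn_leq // cheb_num_dvd.
Qed.

Lemma lcm_upto30_pow4_le : lcm_upto 30 ^ 4 <= cheb_base ^ 5.
Proof.
have lcm5_le : lcm_upto 5 <= 120 by apply: dvdn_leq (lcm_upto_dvd_fact 5).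
have lcm30_le : lcm_upto 30 <= cheb_base * 120.
  by apply: leq_trans (lcm_upto_mul30_le 1) _; rewrite expn1 leq_mul.
apply: (@leq_trans ((cheb_base * 120) ^ 4)); first by rewrite leq_exp2r.
have base4_gt0 : 0 < cheb_base ^ 4 by rewrite expn_gt0 ltnW ?cheb_base_gt1.
by rewrite expnMn (expnSr cheb_base 4) leq_pmul2l // cheb_base.unlock; lia.
Qed.

Lemma lcm_upto_mul30_pow4_le n : lcm_upto (30 * n) ^ 4 <= cheb_base ^ (5 * n + 25).
Proof.
have base_gt0 : 0 < cheb_base by rewrite ltnW ?cheb_base_gt1.
elim/ltn_ind: n => n IHn; have [-> | n_gt0] := posnP n.
  have lcm0_le : lcm_upto 0 <= 1 by apply: dvdn_leq (lcm_upto_dvd_fact 0).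
  apply: (@leq_trans (1 ^ 4)); first by rewrite leq_exp2r // muln0.
  by rewrite exp1n expn_gt0 base_gt0.
set m := (n + 5) %/ 6.
have step : lcm_upto (30 * n) ^ 4 <= cheb_base ^ (4 * n) * lcm_upto (30 * m) ^ 4.
  rewrite (mulnC 4 n) expnM -expnMn leq_exp2r //; apply: leq_trans (lcm_upto_mul30_le n) _.
  by rewrite leq_mul // leq_lcm_upto //; lia.
apply: leq_trans step _.
have [n_ge25 | n_lt25] := leqP 25 n.
  apply: leq_trans (leq_mul (leqnn _) (IHn m _)) _; first by lia.
  by rewrite -expnD leq_pexp2l //; lia.
have lcm30m : lcm_upto (30 * m) ^ 4 <= cheb_base ^ (4 * m) * lcm_upto 30 ^ 4.
  rewrite (mulnC 4 m) expnM -expnMn leq_exp2r //; apply: leq_trans (lcm_upto_mul30_le m) _.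
  by rewrite leq_mul // leq_lcm_upto //; lia.
apply: leq_trans (leq_mul (leqnn _) (leq_trans lcm30m (leq_mul (leqnn _) lcm_upto30_pow4_le))) _.
by rewrite -!expnD leq_pexp2l //; lia.
Qed.

Lemma lcm_upto_pow4_le m : lcm_upto m ^ 4 <= cheb_base ^ (5 * ((m + 29) %/ 30) + 25).
Proof.
apply: leq_trans (lcm_upto_mul30_pow4_le _); rewrite leq_exp2r // leq_lcm_upto //; lia.
Qed.

(* A prime power [p ^ e <= b] that exceeds [a] has [e >= 2] (no prime lies in [(a, b]]);
   then [p ^ (e - 1) <= b / 2 < a] and [p <= s]. *)
Lemma lcm_upto_dvd_gap a b s : 0 < a -> b < 2 * a ->
    (forall p, prime p -> a < p -> b < p) ->
    (forall p, prime p -> p * p <= b -> p <= s) ->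
  lcm_upto b %| lcm_upto a * lcm_upto s.
Proof.
move=> a_gt0 b_lt no_prime small_p; apply: dvdn_from_log; rewrite ?muln_gt0 ?lcm_upto_gt0 //.
move=> p p_pr; have p_gt1 := prime_gt1 p_pr.
rewrite lognM ?lcm_upto_gt0 // !logn_lcm_upto //.
set e := trunc_log p b; have [-> // | e_gt0] := posnP e.
have b_gt0 : 0 < b by move: e_gt0; rewrite trunc_log_gt0; lia.
have pe_le_b : p ^ e <= b := trunc_logP p_gt1 b_gt0.
have [pe_le_a | a_lt_pe] := leqP (p ^ e) a.
  by rewrite (leq_trans (trunc_log_max p_gt1 pe_le_a)) ?leq_addr.
case: e e_gt0 pe_le_b a_lt_pe => [// | [|e]] _ pe_le_b a_lt_pe.
  by move: (no_prime p p_pr); rewrite expn1 in pe_le_b a_lt_pe; move/(_ a_lt_pe); lia.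
have p_le_s : p <= s.
  by apply: small_p => //; apply: leq_trans pe_le_b; rewrite mulnn leq_pexp2l // ltnW.
have le_e_a : e.+1 <= trunc_log p a.
  apply: trunc_log_max => //; suff : p ^ e.+1 * 2 <= p ^ e.+2 by lia.
  by rewrite [leqRHS]expnSr leq_mul2l p_gt1 orbT.
by rewrite -addn1 leq_add // trunc_log_gt0 p_gt1 /=; lia.
Qed.

Lemma mul60_le_exp2 l : 10 <= l -> 60 * l.+1 <= 2 ^ l.
Proof.
elim: l => // l IHl; rewrite leq_eqVlt => /orP[/eqP <- // | /IHl le_l].
by rewrite expnS; lia.
Qed.

Lemma exp60_le_cheb_base N : 512 <= N -> (2 * N) ^ 60 <= cheb_base ^ (N %/ 16).
Proof.
move=> N_ge; set l := trunc_log 2 (2 * N).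
have lt_2N : 2 * N < 2 ^ l.+1 := trunc_log_ltn (2 * N) (isT : 1 < 2).
have le_2N : 2 ^ l <= 2 * N by apply: trunc_logP; lia.
have l_ge : 10 <= l by apply: trunc_log_max => //; lia.
apply: (@leq_trans (2 ^ (2 * N))).
  apply: (@leq_trans ((2 ^ l.+1) ^ 60)); first by rewrite leq_exp2r // ltnW.
  by rewrite -expnM leq_pexp2l // mulnC (leq_trans (mul60_le_exp2 l_ge)).
apply: (@leq_trans (2 ^ (39 * (N %/ 16)))); first by rewrite leq_pexp2l //; lia.
rewrite expnM leq_exp2r; last by lia.
by rewrite cheb_base.unlock; lia.
Qed.

Lemma prime_in_four_thirds a : 15 * 1000 <= a -> exists2 q, prime q & a < q <= 4 * a %/ 3.
Proof.
move=> a_ge; set b := 4 * a %/ 3.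
have [/existsP[q /andP[q_pr a_lt_q]] | no_prime] :=
  boolP [exists q : 'I_b.+1, prime q && (a < q)].
  by exists q => //; rewrite a_lt_q -ltnS ltn_ord.
have gap p : prime p -> a < p -> b < p.
  move=> p_pr a_lt_p; rewrite ltnNge; apply: contra no_prime => p_le_b.
  by apply/existsP; exists (Ordinal (p_le_b : p < b.+1)); rewrite p_pr.
set N := b %/ 30; set s := a %/ 100.
have small_p p : prime p -> p * p <= b -> p <= s.
  move=> _ pp_le_b; rewrite leqNgt; apply/negP => s_lt_p.
  have : 151 * p <= p * p by rewrite leq_mul2r; apply/orP; right; lia.
  lia.
have lcm_b : lcm_upto b <= lcm_upto a * lcm_upto s.
  by rewrite dvdn_leq ?muln_gt0 ?lcm_upto_gt0 // lcm_upto_dvd_gap //; lia.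
have lower : cheb_base ^ (4 * N) <= (2 * N) ^ 60 * (lcm_upto a ^ 4 * lcm_upto s ^ 4).
  rewrite (mulnC 4 N) expnM (expnM (2 * N) 15 4) -!expnMn leq_exp2r //.
  apply: leq_trans (cheb_base_le_lcm_upto _) _; first by lia.
  by rewrite leq_mul // (leq_trans _ lcm_b) // leq_lcm_upto //; lia.
have N_ge : 512 <= N by clear -a_ge; lia.
have upper := leq_mul (exp60_le_cheb_base N_ge) (leq_mul (lcm_upto_pow4_le a) (lcm_upto_pow4_le s)).
move: (leq_trans lower upper); rewrite -!expnD leq_exp2l ?cheb_base_gt1 //.
by clear -a_ge; lia.
Qed.

(* With [2 k <= a], this is what bounds the [q (q + 2) n / (q + 2 - k)] vertices of the
   universal graph built on [q] by [15 a n / 7]. *)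
Definition fits a q := 14 * q * (q + 2) < 15 * a * (2 * q + 4 - a).

Lemma fits_mono p a q : p <= a -> a < q -> fits p q -> fits a q.
Proof.
rewrite /fits => le_pa lt_aq /leq_trans; apply; rewrite -!mulnA leq_mul2l /=.
have [d def_a] : exists d, a = p + d by exists (a - p); lia.
have [e def_X] : exists e, 2 * q + 4 = p + d + p + e by exists (2 * q + 4 - (p + d + p)); lia.
rewrite def_X def_a (_ : p + d + p + e - p = p + d + e); last by lia.
by rewrite (_ : p + d + p + e - (p + d) = p + e); [nia | lia].
Qed.

Lemma fits_near a q : a < q -> 3 * q <= 4 * a -> fits a q.
Proof.
move=> lt_aq le_q; have [d def_q] : exists d, q = a + d by exists (q - a); lia.
rewrite /fits def_q (_ : 2 * (a + d) + 4 - a = a + 2 * d + 4); last by lia.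
have d_ge1 : 1 <= d by lia.
have le_d : 3 * d <= a by lia.
nia.
Qed.

(* [fits] evaluated in binary arithmetic, so that [vm_compute] can check it near 15000. *)
Section BinaryFits.
Local Open Scope Z_scope.
Definition fitsZ a q : bool :=
  let a := Z.of_nat a in let q := Z.of_nat q in 14 * q * (q + 2) <? 15 * a * (2 * q + 4 - a).
End BinaryFits.

Lemma fitsZE a q : a <= q -> fitsZ a q = fits a q.
Proof.
by rewrite /fitsZ /fits => le_aq; apply/idP/idP => [/Z.ltb_lt | ?]; [lia | apply/Z.ltb_lt; lia].
Qed.

Definition prime_ladder := [:: 29; 41; 53; 73; 97; 131; 179; 241; 317; 421; 569; 769;
  1039; 1399; 1879; 2531; 3413; 4603; 6203; 8363; 11273; 15199].

Lemma prime_ladder_fits : path (fun p q => [&& p < q, prime q & fitsZ p q]) 28 prime_ladder.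
Proof. by vm_compute. Qed.

Lemma fits_ladder p0 s a : path (fun p q => [&& p < q, prime q & fitsZ p q]) p0 s ->
  p0 <= a < last p0 s -> exists2 q, prime q & a < q /\ fits a q.
Proof.
elim: s p0 => [|q s IHs] p0 /=; first by move=> _ /andP[le_p0a]; rewrite ltnNge le_p0a.
case/andP=> /and3P[p0_lt_q q_pr fits_p0q] path_s /andP[le_p0a lt_a].
have [a_lt_q | q_le_a] := ltnP a q; last by apply: IHs path_s _; rewrite q_le_a.
by exists q => //; split=> //; apply: fits_mono le_p0a a_lt_q _; rewrite -fitsZE // ltnW.
Qed.

Lemma exists_fitting_prime a : 28 <= a -> exists2 q, prime q & a < q /\ fits a q.
Proof.
move=> a_ge28; have [a_lt | a_ge] := ltnP a (15 * 1000).
  by apply: fits_ladder prime_ladder_fits _; rewrite a_ge28 (leq_trans a_lt).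
have [q q_pr /andP[a_lt_q q_le]] := prime_in_four_thirds a_ge.
by exists q => //; split=> //; apply: fits_near => //; lia.
Qed.

Section UnionGraph.
Variables (I V W : finType) (F : I -> sgraph V) (f : I -> V -> W).
Hypothesis f_inj : forall i, injective (f i).

Definition union_adj : rel W := fun x y =>
  [exists i, exists v, exists w, [&& f i v == x, f i w == y & adj (F i) v w]].

Lemma union_adj_sym : symmetric union_adj.
Proof.
move=> x y; apply/idP/idP => /existsP[i /existsP[v /existsP[w /and3P[/eqP<- /eqP<- vw]]]];
  by apply/existsP; exists i; apply/existsP; exists w; apply/existsP; exists v;
     rewrite !eqxx adj_sym.
Qed.

Lemma union_adj_irr : irreflexive union_adj.
Proof.
move=> x; apply/negbTE/negP => /existsP[i /existsP[v /existsP[w /and3P[/eqP fv /eqP fw]]]].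
by rewrite (f_inj (etrans fv (esym fw))) adj_irr.
Qed.

Definition union_graph := SGraph union_adj_sym union_adj_irr.

Hypothesis f_rigid : forall i i' v w v' w',
  adj (F i) v w -> f i v = f i' v' -> f i w = f i' w' -> i = i'.

Lemma union_graph_universal : induced_universal F union_graph.
Proof.
move=> i; exists (f i); split=> // v w /=; apply/idP/idP => [|vw]; last first.
  by apply/existsP; exists i; apply/existsP; exists v; apply/existsP; exists w; rewrite !eqxx.
case/existsP=> i' /existsP[v' /existsP[w' /and3P[/eqP fv /eqP fw vw']]].
have eq_i := f_rigid vw' fv fw; subst i'.
by rewrite -(f_inj fv) -(f_inj fw).
Qed.

End UnionGraph.

Section Relabel.
Variables (W : finType) (U : sgraph W).

Definition relabel_adj : rel 'I_#|W| := fun x y => adj U (enum_val x) (enum_val y).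

Lemma relabel_adj_sym : symmetric relabel_adj.
Proof. by move=> x y; exact: adj_sym. Qed.

Lemma relabel_adj_irr : irreflexive relabel_adj.
Proof. by move=> x; exact: adj_irr. Qed.

Definition relabel := SGraph relabel_adj_sym relabel_adj_irr.

Lemma induced_sub_relabel (V : finType) (G : sgraph V) : induced_sub G U -> induced_sub G relabel.
Proof.
case=> f [f_inj f_adj]; exists (enum_rank \o f); split=> [v w /= /enum_rank_inj /f_inj // | v w].
by rewrite /= /relabel_adj !enum_rankK.
Qed.

End Relabel.

Lemma universal_of_size_card (I V W : finType) (F : I -> sgraph V) (U : sgraph W) :
  induced_universal F U -> universal_of_size F #|W|.
Proof. by move=> univ; exists (relabel U) => i; apply: induced_sub_relabel. Qed.

Lemma eqn_modMl_prime q d x y : prime q -> ~~ (q %| d) ->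
  (d * x == d * y %[mod q]) = (x == y %[mod q]).
Proof.
move=> q_pr ndvd; wlog le_yx : x y / y <= x.
  by move=> W; case/orP: (leq_total y x) => /W //; rewrite eq_sym => ->; rewrite eq_sym.
rewrite !eqn_mod_dvd ?leq_mul2l ?le_yx ?orbT // -mulnBr Gauss_dvdr //.
by rewrite prime_coprime.
Qed.

(* Columns [j < q] and [j = q] are the [q + 1] parallel classes of lines of the affine plane
   over [F_q]; [affine_label q i j] is the line of class [j] through the point
   [(i %% q, i %/ q)]. *)
Definition affine_label q i j :=
  if j < q then (i %% q + j * (i %/ q)) %% q else (i %/ q) %% q.

Lemma affine_label_lt q i j : 0 < q -> affine_label q i j < q.
Proof. by move=> q_gt0; rewrite /affine_label; case: ifP; rewrite ltn_mod. Qed.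

Lemma affine_label_inj q i i' j1 j2 : prime q -> i < q * q -> i' < q * q -> j1 < j2 <= q ->
    affine_label q i j1 = affine_label q i' j1 -> affine_label q i j2 = affine_label q i' j2 ->
  i = i'.
Proof.
move=> q_pr lt_i lt_i' /andP[lt_j12 le_j2]; have q_gt0 := prime_gt0 q_pr.
rewrite /affine_label (leq_trans lt_j12 le_j2) => /eqP eq1 /eqP eq2.
have eq_y : i %/ q = i' %/ q.
  rewrite -(modn_small (_ : i %/ q < q)) 1?ltn_divLR 1?mulnC //.
  rewrite -[RHS](modn_small (_ : i' %/ q < q)) 1?ltn_divLR 1?mulnC //; apply/eqP.
  move: eq2; case: (ltnP j2 q) => [lt_j2 | _] //.
  rewrite -(subnKC (ltnW lt_j12)) !mulnDl !addnA -modnDml (eqP eq1) modnDml eqn_modDl.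
  by rewrite eqn_modMl_prime // gtnNdvd ?subn_gt0 // (leq_ltn_trans (leq_subr _ _)).
rewrite (divn_eq i q) (divn_eq i' q) eq_y; congr (_ + _).
rewrite -(modn_small (ltn_pmod i q_gt0)) -[RHS](modn_small (ltn_pmod i' q_gt0)).
by apply/eqP; move: eq1; rewrite eq_y eqn_modDr.
Qed.

Lemma sum_divn_leq I (r : seq I) (P : pred I) (F : I -> nat) b : 0 < b ->
  \sum_(i <- r | P i) (F i %/ b) <= (\sum_(i <- r | P i) F i) %/ b.
Proof.
move=> b_gt0; elim/big_rec2: _ => // i x y _ le_xy.
by rewrite (leq_trans (leq_add (leqnn _) le_xy)) // divnD // leq_addr.
Qed.

Section ColumnLayout.
Variables (n k b : nat) (col : 'I_n -> 'I_k).
Hypothesis b_gt0 : 0 < b.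

Definition color_class (c : 'I_k) := [set v | col v == c].
Definition class_rank v := index v (enum (color_class (col v))).
Definition class_columns (c : 'I_k) := (#|color_class c| + b.-1) %/ b.
Definition color_offset (c : nat) := \sum_(c' < k | c' < c) class_columns c'.
Definition column v := color_offset (col v) + class_rank v %/ b.
Definition row v := class_rank v %% b.
Definition grid_columns := (n + k * b.-1) %/ b.

Lemma class_rank_lt v : class_rank v < #|color_class (col v)|.
Proof. by rewrite /class_rank cardE index_mem mem_enum inE. Qed.

Lemma class_rank_inj v w : col v = col w -> class_rank v = class_rank w -> v = w.
Proof.
move=> eq_col; rewrite /class_rank eq_col => eq_rank.
have v_in : v \in enum (color_class (col w)) by rewrite mem_enum inE eq_col.
by rewrite -(nth_index v v_in) eq_rank nth_index // mem_enum inE.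
Qed.

Lemma sum_card_color_class : \sum_(c < k) #|color_class c| = n.
Proof.
rewrite -[RHS]card_ord -sum1_card (partition_big col xpredT) //=.
by apply: eq_bigr => c _; rewrite sum1_card; apply: eq_card => v; rewrite inE.
Qed.

Lemma column_lt_next v : column v < color_offset (col v) + class_columns (col v).
Proof.
rewrite ltn_add2l ltn_divLR //; apply: leq_trans (class_rank_lt v) _.
by rewrite /class_columns; have := divn_eq (#|color_class (col v)| + b.-1) b;
  have := ltn_pmod (#|color_class (col v)| + b.-1) b_gt0; lia.
Qed.

Lemma color_offset_next (c : 'I_k) c' :
  c < c' -> color_offset c + class_columns c <= color_offset c'.
Proof.
move=> lt_cc'; rewrite /color_offset [leqRHS](bigD1 c) //= addnC leq_add2l.
apply: (sub_le_big leqnn (fun x y => leq_addr y x)) => d lt_dc.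
by rewrite (ltn_trans lt_dc lt_cc'); apply: contraTneq lt_dc => ->; rewrite ltnn.
Qed.

Lemma column_lt_of_color v w : col v < col w -> column v < column w.
Proof.
move=> lt_vw; apply: leq_trans (column_lt_next v) _.
exact: leq_trans (color_offset_next lt_vw) (leq_addr _ _).
Qed.

Lemma column_neq v w : col v != col w -> column v != column w.
Proof.
move=> ne_vw; rewrite neq_ltn; case: (ltngtP (col v) (col w)) => [lt | lt | /val_inj eq].
- by rewrite column_lt_of_color.
- by rewrite (column_lt_of_color lt) orbT.
- by rewrite eq eqxx in ne_vw.
Qed.

Lemma column_row_inj v w : column v = column w -> row v = row w -> v = w.
Proof.
move=> eq_column eq_row.
have eq_col : col v = col w by apply/eqP; apply: contraLR (@column_neq v w) _; apply/eqP.
apply: (class_rank_inj eq_col); move: eq_column; rewrite /column eq_col => /addnI eq_div.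
by rewrite (divn_eq (class_rank v) b) eq_div -/(row v) eq_row -divn_eq.
Qed.

Lemma column_lt v : column v < grid_columns.
Proof.
apply: leq_trans (column_lt_next v) _; apply: leq_trans (color_offset_next (ltn_ord _)) _.
rewrite /color_offset (eq_bigl xpredT) => [|c]; last by rewrite ltn_ord.
apply: leq_trans (sum_divn_leq _ _ _ b_gt0) _.
by rewrite big_split /= sum_card_color_class sum_nat_const card_ord.
Qed.

Lemma row_lt v : row v < b.
Proof. by rewrite ltn_mod. Qed.

End ColumnLayout.

Section AffineEmbedding.
Variables (n k q b t : nat) (F : 'I_t -> sgraph 'I_n) (col : 'I_t -> 'I_n -> 'I_k).
Hypotheses (q_pr : prime q) (b_gt0 : 0 < b) (t_le : t <= q * q).
Hypothesis columns_le : grid_columns n k b <= q.+1.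
Hypothesis col_proper : forall i v w, adj (F i) v w -> col i v != col i w.

Definition grid_vertex (i : 'I_t) (v : 'I_n) : 'I_(grid_columns n k b) * 'I_q * 'I_b :=
  (Ordinal (column_lt (col i) b_gt0 v),
   Ordinal (affine_label_lt i (column b (col i) v) (prime_gt0 q_pr)),
   Ordinal (row_lt (col i) b_gt0 v)).

Lemma grid_vertex_inj i : injective (grid_vertex i).
Proof. by move=> v w [eq_column _ eq_row]; apply: column_row_inj eq_column eq_row. Qed.

Lemma grid_vertex_rigid i i' v w v' w' : adj (F i) v w ->
  grid_vertex i v = grid_vertex i' v' -> grid_vertex i w = grid_vertex i' w' -> i = i'.
Proof.
move=> vw [eq_cv eq_lv _] [eq_cw eq_lw _]; rewrite -eq_cv in eq_lv; rewrite -eq_cw in eq_lw.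
have ne_c := column_neq b_gt0 (col_proper vw).
have col_le u : column b (col i) u <= q by rewrite -ltnS (leq_trans (column_lt _ b_gt0 u)).
have [lt_i lt_i'] := (leq_trans (ltn_ord i) t_le, leq_trans (ltn_ord i') t_le).
apply: val_inj; case: (ltngtP (column b (col i) v) (column b (col i) w)) => [lt | lt | eq].
- by apply: (affine_label_inj q_pr lt_i lt_i' _ eq_lv eq_lw); rewrite lt col_le.
- by apply: (affine_label_inj q_pr lt_i lt_i' _ eq_lw eq_lv); rewrite lt col_le.
- by rewrite eq eqxx in ne_c.
Qed.

Lemma universal_of_grid_size : universal_of_size F (grid_columns n k b * q * b).
Proof.
have := universal_of_size_card (union_graph_universal grid_vertex_inj grid_vertex_rigid).
by rewrite !card_prod !card_ord.
Qed.

End AffineEmbedding.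

Definition column_height n k q := (n - k) %/ (q + 2 - k) + 1.

Lemma column_height_gt0 n k q : 0 < column_height n k q.
Proof. by rewrite /column_height addn1. Qed.

Lemma columns_le n k q a : 2 * k <= a -> a < q ->
  grid_columns n k (column_height n k q) <= q.+1.
Proof.
move=> le_ka lt_aq; set b := column_height n k q; have b_gt0 : 0 < b := column_height_gt0 n k q.
have lt_nk : n - k < b * (q + 2 - k) by rewrite /b /column_height addn1 ltn_ceil //; lia.
have le_k : k <= k * b by rewrite leq_pmulr.
rewrite /grid_columns -ltnS ltn_divLR // -subn1 mulnBr muln1.
by rewrite (_ : q.+2 = k + (q + 2 - k)) 1?mulnDl 1?[_ * b]mulnC; lia.
Qed.

Lemma grid_size_lt n k q a : 0 < n -> 2 * k <= a -> a < q -> fits a q ->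
  7 * (grid_columns n k (column_height n k q) * q * column_height n k q) < 15 * a * n.
Proof.
move=> n_gt0 le_ka lt_aq fits_aq; set b := column_height n k q; set D := q + 2 - k.
have D_gt0 : 0 < D by lia.
have le_bD : b.-1 * D <= n.
  by rewrite /b /column_height addn1 /= (leq_trans (leq_trunc_div _ _)) ?leq_subr.
have le_gb : grid_columns n k b * b <= n + k * b.-1 by rewrite leq_trunc_div.
have le_nD : (n + k * b.-1) * D <= n * (q + 2).
  rewrite mulnDl -mulnA (_ : q + 2 = D + k); last by lia.
  by rewrite mulnDr leq_add2l mulnC leq_mul2r le_bD orbT.
have lt_fits : 7 * q * (q + 2) < 15 * a * D.
  have le_2D : 2 * q + 4 - a <= 2 * D by lia.
  by move: (leq_trans fits_aq (leq_mul (leqnn (15 * a)) le_2D)); rewrite /fits; lia.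
set g := grid_columns n k b; rewrite -(ltn_pmul2r D_gt0).
have -> : 7 * (g * q * b) * D = 7 * q * (g * b * D) by ring.
apply: (@leq_ltn_trans (7 * q * (n * (q + 2)))).
  by rewrite leq_mul // (leq_trans _ le_nD) // leq_mul2r le_gb orbT.
have -> : 7 * q * (n * (q + 2)) = n * (7 * q * (q + 2)) by ring.
have -> : 15 * a * n * D = n * (15 * a * D) by ring.
by rewrite ltn_pmul2l.
Qed.

Lemma nat_sqrt_exists t : exists a, a * a <= t < a.+1 * a.+1.
Proof.
elim: t => [|t [a /andP[le_t lt_t]]]; first by exists 0.
have [lt_t1 | le_t1] := ltnP t.+1 (a.+1 * a.+1); first by exists a; rewrite lt_t1 andbT ltnW.
by exists a.+1; rewrite le_t1; lia.
Qed.

Local Open Scope ring_scope.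

Lemma natr_lt_sqrt_bound (R : rcfType) (m a t n : nat) :
  (7 * m < 15 * a * n)%N -> (a * a <= t)%N -> (m%:R : R) < 15 / 7 * Num.sqrt t%:R * n%:R.
Proof.
rewrite -(ltr_nat R) !natrM => lt_m le_aa.
have le_a : (a%:R : R) <= Num.sqrt t%:R.
  by rewrite -(ger0_norm (ler0n _ a)) -sqrtr_sqr ler_wsqrtr // expr2 -natrM ler_nat.
have := ler_wpM2r (ler0n _ n) le_a.
set s := Num.sqrt _; set A := a%:R; set N := n%:R; set M := m%:R => le_AN.
have -> : 15 / 7 * s * N = 15 / 7 * (s * N) by ring.
move: lt_m; rewrite (_ : 15%:R * A * N = 15 * (A * N)) -?mulrA //; lra.
Qed.

Theorem theorem6 (n k p t : nat) (F : 'I_t -> sgraph 'I_n) :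
  (0 < n)%N ->
  (p * (k ^ 2 - 1) <= n)%N ->
  (forall i, colorable k (F i)) ->
  (forall i, pathwidth_le (F i) p) ->
  (maxn (4 * k ^ 2) 811 <= t)%N ->
  exists2 m : nat, universal_of_size F m &
    forall R : rcfType, (m%:R : R) < 15 / 7 * Num.sqrt (t%:R) * n%:R.
Proof.
move=> n_gt0 _ colorable_F _; rewrite geq_max => /andP[le_kt le_811t].
have [col col_proper] := fin_all_exists colorable_F.
have [a /andP[le_aa lt_t]] := nat_sqrt_exists t.
have a_ge28 : (28 <= a)%N by nia.
have le_ka : (2 * k <= a)%N by nia.
have [q q_pr [lt_aq fits_aq]] := exists_fitting_prime a_ge28.
exists (grid_columns n k (column_height n k q) * q * column_height n k q)%N.
  apply: universal_of_grid_size q_pr (column_height_gt0 n k q) _ _ col_proper.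
  - nia.
  - exact: columns_le le_ka lt_aq.
by move=> R; apply: natr_lt_sqrt_bound (grid_size_lt n_gt0 le_ka lt_aq fits_aq) le_aa.
Qed.
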